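(* Let $A\to M$ be a vector bundle of rank at least $n$. Let $\widehat{\xi}^1,\dots,\widehat{\xi}^n\in\Gamma(A^* )$ be linearly independent over $C^\infty(M)$ and let $\widehat{X}_1,\dots,\widehat{X}_n\in\Gamma(\mathrm{CDO}(A))$ be covariant differential operators with symbols $\widehat{x}_1,\dots,\widehat{x}_n\in\Gamma(TM)$. Define the anchor $a_A:A\to TM$, the operator $\nabla^A:\Gamma(A)\times\Gamma(A)\to\Gamma(A)$ and the bracket $[\cdot,\cdot]_A$ on $\Gamma(A)$ by $$a_A(y)=\sum_{i=1}^n\langle y,\widehat{\xi}^i\rangle\,\widehat{x}_i,\qquad \nabla^A_y z=\sum_{i=1}^n\langle y,\widehat{\xi}^i\rangle\,\widehat{X}_i(z),\qquad [y,z]_A=\nabla^A_yz-\nabla^A_zy,$$ for $y,z\in\Gamma(A)$. Suppose there are functions $a_{ik}^j\in C^\infty(M)$ ($1\le i,j,k\le n$) such that for all $i,j$ $$\widehat{X}_i(\widehat{\xi}^j)=\sum_{k=1}^n a_{ik}^j\,\widehat{\xi}^k,\qquad [\widehat{X}_i,\widehat{X}_j]=\sum_{k=1}^n\big(a_{ji}^k-a_{ij}^k\big)\widehat{X}_k .$$ Then $R^{\nabla^A}(x,y)z=0$ for all $x,y,z\in\Gamma(A)$, and $(A,[\cdot,\cdot]_A,a_A)$ is a Lie algebroid.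
   Context: A covariant differential operator on $A$ is an $\mathbb{R}$-linear map $\widehat{X}:\Gamma(A)\to\Gamma(A)$ together with a vector field $\widehat{x}$ (its symbol) such that $\widehat{X}(fy)=f\widehat{X}(y)+\widehat{x}(f)\,y$ for all $f\in C^\infty(M)$, $y\in\Gamma(A)$. Such an operator acts on $\Gamma(A^* )$ by the dual action $\langle \widehat{X}(\xi),y\rangle=\widehat{x}\langle\xi,y\rangle-\langle\xi,\widehat{X}(y)\rangle$. The commutator $[\widehat{X},\widehat{Y}]=\widehat{X}\circ\widehat{Y}-\widehat{Y}\circ\widehat{X}$ of covariant differential operators is a covariant differential operator. For the operator $\nabla=\nabla^A$ the curvature is $R^{\nabla}(x,y)z=\nabla_x\nabla_yz-\nabla_y\nabla_xz-\nabla_{[x,y]_A}z$. A Lie algebroid $(A,[\cdot,\cdot]_A,a_A)$ is a vector bundle with a bundle map $a_A:A\to TM$ and an $\mathbb{R}$-bilinear skew-symmetric bracket on $\Gamma(A)$ satisfying $[x,fy]_A=f[x,y]_A+a_A(x)(f)\,y$ and the Jacobi identity. *)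

(* Algebraic (Serre--Swan) model of the smooth setting:
   K      : the real scalars (a field),
   R      : commutative K-algebra standing for C^oo(M),
   vector fields on M = K-linear derivations R -> R,
   V      : R-module standing for Gamma(A),
   Gamma(A^* ) = R-linear maps V -> R. *)
From HB Require Import structures.
From mathcomp Require Import all_boot all_order all_algebra.
Set Implicit Arguments. Unset Strict Implicit. Unset Printing Implicit Defensive.
Import Order.TTheory GRing.Theory.
Local Open Scope ring_scope.

Section Defs.
Variables (K : fieldType) (R : comAlgType K) (V : lmodType R).

Definition is_vfield (D : R -> R) : Prop :=
  (forall (k : K) (f g : R), D (k *: f + g) = k *: D f + D g) /\
  (forall f g : R, D (f * g) = f * D g + g * D f).

Definition is_dual_section (xi : V -> R) : Prop :=
  forall (f : R) (y z : V), xi (f *: y + z) = f * xi y + xi z.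

Definition is_cdo (X : V -> V) (xh : R -> R) : Prop :=
  [/\ is_vfield xh,
      (forall (k : K) (y z : V), X (k%:A *: y + z) = k%:A *: X y + X z) &
      (forall (f : R) (y : V), X (f *: y) = f *: X y + xh f *: y)].

Definition cdo_dual (X : V -> V) (xh : R -> R) (xi : V -> R) : V -> R :=
  fun y => xh (xi y) - xi (X y).

Definition cdo_comm (X Y : V -> V) : V -> V := fun z => X (Y z) - Y (X z).

Variable n : nat.
Variables (xi : 'I_n -> V -> R) (xh : 'I_n -> R -> R) (X : 'I_n -> V -> V).

Definition anchorA (y : V) : R -> R := fun f => \sum_(i < n) xi i y * xh i f.
Definition nablaA (y z : V) : V := \sum_(i < n) xi i y *: X i z.
Definition bracketA (y z : V) : V := nablaA y z - nablaA z y.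

End Defs.

Definition curvature (R : nzRingType) (V : lmodType R)
  (nab br : V -> V -> V) (x y z : V) : V :=
  nab x (nab y z) - nab y (nab x z) - nab (br x y) z.

Definition is_lie_algebroid (K : fieldType) (R : comAlgType K) (V : lmodType R)
  (br : V -> V -> V) (an : V -> R -> R) : Prop :=
      (forall y, is_vfield (an y)) /\
      (forall (f g : R) (y z : V), an (f *: y + z) g = f * an y g + an z g) /\
      (forall (k : K) (x y z : V), br (k%:A *: x + y) z = k%:A *: br x z + br y z) /\
      (forall (k : K) (x y z : V), br x (k%:A *: y + z) = k%:A *: br x y + br x z) /\
      (forall x y : V, br x y = - br y x) /\
      (forall (x y : V) (f : R), br x (f *: y) = f *: br x y + an x f *: y) /\
      (forall x y z : V, br x (br y z) + br y (br z x) + br z (br x y) = 0).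

(* Expand nabla_x nabla_y z in the coframe xi.  Besides nabla_{nabla_x y} z it
   has a second-order part  sum xi^i(x) xi^j(y) X_i X_j z  and a first-order
   part coming from  X_i(xi^j) = sum_k a_ik^j xi^k.  By the commutator relation
   the antisymmetrization in (x, y) of the second-order part is exactly minus
   that of the first-order part, and the torsion-free bracket absorbs the
   remaining terms, so nabla is flat.  For the torsion-free bracket of a flat
   connection the Jacobiator is the cyclic sum of the curvature (first Bianchi
   identity); the other Lie algebroid axioms are the connection axioms. *)
From HB Require Import structures.
From mathcomp Require Import all_boot all_order all_algebra.
Set Implicit Arguments. Unset Strict Implicit.
Import GRing.Theory.
Local Open Scope ring_scope.

Section AdditiveMorph.
Variables (U W : zmodType) (f : U -> W).
Hypothesis fD : {morph f : x y / x + y}.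

Lemma morph_add0 : f 0 = 0.
Proof. by apply: (addrI (f 0)); rewrite -fD !addr0. Qed.

Lemma morph_addN x : f (- x) = - f x.
Proof. by apply: (addrI (f x)); rewrite -fD !subrr morph_add0. Qed.

Lemma morph_addB x y : f (x - y) = f x - f y.
Proof. by rewrite fD morph_addN. Qed.

Lemma morph_add_sum I (r : seq I) (P : pred I) (F : I -> U) :
  f (\sum_(i <- r | P i) F i) = \sum_(i <- r | P i) f (F i).
Proof. exact: (big_morph f fD morph_add0). Qed.

End AdditiveMorph.

Lemma addr_cyclic_regroup (V : zmodType) (p1 p2 p3 p4 p5 p6 q1 q2 q3 : V) :
  (p1 - p2 - q1) + (p3 - p4 - q2) + (p5 - p6 - q3) =
  (p1 - p4 - q3) + (p3 - p6 - q1) + (p5 - p2 - q2).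
Proof. by rewrite !addrA [LHS](ACl (1*5*9*4*8*3*7*2*6)). Qed.

Definition torsion_free_bracket (V : zmodType) (nab : V -> V -> V) x y : V :=
  nab x y - nab y x.

Section FlatConnection.
Variables (K : fieldType) (R : comAlgType K) (V : lmodType R).
Variables (nab : V -> V -> V) (an : V -> R -> R).
Hypothesis nab_linl :
  forall (f : R) x y z, nab (f *: x + y) z = f *: nab x z + nab y z.
Hypothesis nab_linr :
  forall (k : K) x y z, nab z (k%:A *: x + y) = k%:A *: nab z x + nab z y.

Hypothesis nab_Leibniz :
  forall (f : R) x y, nab x (f *: y) = f *: nab x y + an x f *: y.

Local Notation br := (torsion_free_bracket nab).

Lemma nabDl z : {morph nab^~ z : x y / x + y}.
Proof. by move=> x y /=; rewrite -[x]scale1r nab_linl !scale1r. Qed.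

Lemma nabDr x : {morph nab x : y z / y + z}.
Proof. by move=> y z; rewrite -[y]scale1r -(scale1r 1) nab_linr !scale1r. Qed.

Lemma nabZl (f : R) x z : nab (f *: x) z = f *: nab x z.
Proof. by rewrite -[f *: x]addr0 nab_linl (morph_add0 (nabDl z)) addr0. Qed.

Lemma torsion_free_bracketN x y : br x y = - br y x.
Proof. by rewrite /torsion_free_bracket opprB. Qed.

Lemma torsion_free_bracket_linl (k : K) x y z :
  br (k%:A *: x + y) z = k%:A *: br x z + br y z.
Proof.
by rewrite /torsion_free_bracket nab_linl nab_linr scalerBr opprD addrACA.
Qed.

Lemma torsion_free_bracket_linr (k : K) x y z :
  br x (k%:A *: y + z) = k%:A *: br x y + br x z.
Proof.
by rewrite torsion_free_bracketN torsion_free_bracket_linl opprD -scalerN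
  -!torsion_free_bracketN.
Qed.

Lemma torsion_free_bracket_Leibniz x y (f : R) :
  br x (f *: y) = f *: br x y + an x f *: y.
Proof.
by rewrite /torsion_free_bracket nab_Leibniz nabZl scalerBr addrAC.
Qed.

Lemma torsion_free_jacobi x y z :
  br x (br y z) + br y (br z x) + br z (br x y) =
  curvature nab br x y z + curvature nab br y z x + curvature nab br z x y.
Proof.
have br_br u v w :
    br u (br v w) = nab u (nab v w) - nab u (nab w v) - nab (br v w) u.
  by rewrite {1}/torsion_free_bracket (morph_addB (nabDr u)).
by rewrite !br_br addr_cyclic_regroup.
Qed.

Hypothesis an_vfield : forall y, is_vfield (an y).
Hypothesis an_linear :
  forall (f g : R) y z, an (f *: y + z) g = f * an y g + an z g.
Hypothesis flat : forall x y z, curvature nab br x y z = 0.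

Lemma lie_algebroid_of_flat : is_lie_algebroid br an.
Proof.
split; first exact: an_vfield.
split; first exact: an_linear.
split; first exact: torsion_free_bracket_linl.
split; first exact: torsion_free_bracket_linr.
split; first exact: torsion_free_bracketN.
split; first exact: torsion_free_bracket_Leibniz.
by move=> x y z; rewrite torsion_free_jacobi !flat !addr0.
Qed.

End FlatConnection.

Section CoframeConnection.
Variables (K : fieldType) (R : comAlgType K) (V : lmodType R) (n : nat).
Variables (xi : 'I_n -> V -> R) (X : 'I_n -> V -> V) (xh : 'I_n -> R -> R).
Hypothesis xi_dual : forall i, is_dual_section (xi i).
Hypothesis X_cdo : forall i, is_cdo (X i) (xh i).

Local Notation N := (nablaA xi X).

Lemma dual_sectionD i : {morph xi i : y z / y + z}.
Proof. by move=> y z; rewrite -[y in LHS]scale1r xi_dual mul1r. Qed.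

Lemma dual_sectionZ i (f : R) y : xi i (f *: y) = f * xi i y.
Proof.
by rewrite -[f *: y]addr0 xi_dual (morph_add0 (dual_sectionD i)) addr0.
Qed.

Lemma cdoD i : {morph X i : y z / y + z}.
Proof.
have [_ X_lin _] := X_cdo i.
by move=> y z; rewrite -[y]scale1r -(scale1r 1) X_lin !scale1r.
Qed.

Lemma cdoZ i (f : R) y : X i (f *: y) = f *: X i y + xh i f *: y.
Proof. by have [_ _ ->] := X_cdo i. Qed.

Lemma nablaA_linl (f : R) x y z : N (f *: x + y) z = f *: N x z + N y z.
Proof.
rewrite /nablaA scaler_sumr -big_split; apply: eq_bigr => i _.
by rewrite xi_dual scalerDl scalerA.
Qed.

Lemma nablaA_linr (k : K) x y z :
  N z (k%:A *: x + y) = k%:A *: N z x + N z y.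
Proof.
rewrite /nablaA scaler_sumr -big_split; apply: eq_bigr => i _.
have [_ -> _] := X_cdo i.
by rewrite scalerDr !scalerA mulrC.
Qed.

Lemma nablaA_Leibniz (f : R) x y :
  N x (f *: y) = f *: N x y + anchorA xi xh x f *: y.
Proof.
rewrite /nablaA /anchorA scaler_sumr scaler_suml -big_split.
by apply: eq_bigr => i _; rewrite cdoZ scalerDr !scalerA mulrC.
Qed.

Lemma anchorA_vfield y : is_vfield (anchorA xi xh y).
Proof.
split=> [k f g | f g]; rewrite /anchorA.
  rewrite scaler_sumr -big_split; apply: eq_bigr => i _.
  by have [[-> _] _ _] := X_cdo i; rewrite mulrDr scalerAr.
rewrite !mulr_sumr -big_split; apply: eq_bigr => i _.
by have [[_ ->] _ _] := X_cdo i; rewrite mulrDr !(mulrCA (xi i y)).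
Qed.

Lemma anchorA_linear (f g : R) y z :
  anchorA xi xh (f *: y + z) g = f * anchorA xi xh y g + anchorA xi xh z g.
Proof.
rewrite /anchorA mulr_sumr -big_split; apply: eq_bigr => i _.
by rewrite xi_dual mulrDl mulrA.
Qed.

Definition coframe_sum2 (x y : V) (F : 'I_n -> 'I_n -> V) : V :=
  \sum_(i < n) \sum_(j < n) (xi i x * xi j y) *: F i j.

Lemma coframe_sum2C x y F :
  coframe_sum2 y x F = coframe_sum2 x y (fun i j => F j i).
Proof.
rewrite /coframe_sum2 exchange_big; apply: eq_bigr => i _.
by apply: eq_bigr => j _; rewrite mulrC.
Qed.

Lemma coframe_sum2B x y F G :
  coframe_sum2 x y F - coframe_sum2 x y G =
  coframe_sum2 x y (fun i j => F i j - G i j).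
Proof.
rewrite /coframe_sum2 -sumrB; apply: eq_bigr => i _.
by rewrite -sumrB; apply: eq_bigr => j _; rewrite scalerBr.
Qed.

Definition second_order_term x y z :=
  coframe_sum2 x y (fun i j => X i (X j z)).

Variable a : 'I_n -> 'I_n -> 'I_n -> R.
Hypothesis X_dual : forall i j y,
  cdo_dual (X i) (xh i) (xi j) y = \sum_(k < n) a i k j * xi k y.
Hypothesis X_comm : forall i j z,
  cdo_comm (X i) (X j) z = \sum_(k < n) (a j i k - a i j k) *: X k z.

Definition first_order_term x y z :=
  coframe_sum2 x y (fun i j => \sum_(k < n) a i j k *: X k z).

Lemma nablaA_nablaA_l x y z :
  N (N x y) z = \sum_(i < n) \sum_(j < n) (xi i x * xi j (X i y)) *: X j z.
Proof.
rewrite /nablaA exchange_big; apply: eq_bigr => j _.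
rewrite (morph_add_sum (dual_sectionD j)) scaler_suml.
by apply: eq_bigr => i _; rewrite dual_sectionZ.
Qed.

Lemma nablaA_nablaA x y z :
  N x (N y z) =
  second_order_term x y z + N (N x y) z + first_order_term x y z.
Proof.
have symbol_xi i j :
    xh i (xi j y) = xi j (X i y) + \sum_(k < n) a i k j * xi k y.
  by rewrite -X_dual /cdo_dual addrC subrK.
rewrite nablaA_nablaA_l /second_order_term /first_order_term /coframe_sum2.
rewrite -!big_split /=.
apply: eq_bigr => i _; rewrite {1}/nablaA (morph_add_sum (cdoD i)) scaler_sumr.
rewrite [X in _ = _ + X](eq_bigr (fun j =>
  \sum_(k < n) (xi i x * xi j y * a i j k) *: X k z)); last first.
  by move=> j _; rewrite scaler_sumr; apply: eq_bigr => k _; rewrite scalerA.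
rewrite exchange_big -!big_split /=; apply: eq_bigr => j _.
rewrite cdoZ symbol_xi scalerDr scalerDl scalerDr !scalerA addrA.
congr (_ + _); rewrite mulr_sumr scaler_suml; apply: eq_bigr => k _.
by rewrite [a i k j * _]mulrC mulrA.
Qed.

Lemma second_order_term_skew x y z :
  second_order_term x y z - second_order_term y x z =
  first_order_term y x z - first_order_term x y z.
Proof.
rewrite /second_order_term /first_order_term !(coframe_sum2C x y).
rewrite !coframe_sum2B /coframe_sum2.
apply: eq_bigr => i _; apply: eq_bigr => j _; congr (_ *: _).
rewrite -[LHS]/(cdo_comm (X i) (X j) z) X_comm -sumrB.
by apply: eq_bigr => k _; rewrite scalerBl.
Qed.

Lemma nablaA_flat x y z : curvature N (bracketA xi X) x y z = 0.
Proof.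
rewrite /curvature !nablaA_nablaA (morph_addB (nabDl nablaA_linl z)).
rewrite [_ + N (N x y) z + _]addrAC [_ + N (N y x) z + _]addrAC opprD addrACA.
rewrite addrK opprD addrACA second_order_term_skew.
by rewrite addrC addrA subrK subrr.
Qed.

End CoframeConnection.

Theorem proposition2p11 (K : fieldType) (R : comAlgType K) (V : lmodType R)
  (n : nat) (xi : 'I_n -> V -> R) (X : 'I_n -> V -> V) (xh : 'I_n -> R -> R)
  (a : 'I_n -> 'I_n -> 'I_n -> R) :
  (forall i, is_dual_section (xi i)) ->
  (* xi^1, ..., xi^n linearly independent over C^oo(M) *)
  (forall c : 'I_n -> R,
     (forall y : V, \sum_(i < n) c i * xi i y = 0) -> forall i, c i = 0) ->
  (forall i, is_cdo (X i) (xh i)) ->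
  (* X_i(xi^j) = sum_k a_{ik}^j xi^k, with a i k j = a_{ik}^j *)
  (forall i j (y : V),
     cdo_dual (X i) (xh i) (xi j) y = \sum_(k < n) a i k j * xi k y) ->
  (* [X_i, X_j] = sum_k (a_{ji}^k - a_{ij}^k) X_k *)
  (forall i j (z : V),
     cdo_comm (X i) (X j) z = \sum_(k < n) (a j i k - a i j k) *: X k z) ->
  (forall x y z : V,
     curvature (nablaA xi X) (bracketA xi X) x y z = 0) /\
  is_lie_algebroid (bracketA xi X) (anchorA xi xh).
Proof.
move=> xi_dual _ X_cdo X_dual X_comm.
have flat := nablaA_flat xi_dual X_cdo X_dual X_comm.
split=> //; apply: lie_algebroid_of_flat => //.
- exact: nablaA_linl.
- exact: nablaA_linr.
- exact: nablaA_Leibniz.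
- exact: anchorA_vfield.
exact: anchorA_linear.
Qed.
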